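(* For any graph $G$ with no isolated vertex, order $n$ and maximum degree $\Delta$, $$\left\lceil\frac{2n}{\Delta+1}\right\rceil\le\gamma_{(2,1,0)}(G)\le\min\{\gamma_{\times2}(G)-|L(G)|+|S(G)|,\;2\gamma(G)\}.$$
   Context: All graphs are finite and simple; $N(v)$ is the open neighbourhood and $N[v]=N(v)\cup\{v\}$. $\gamma_{(2,1,0)}(G)$ is the minimum of $\sum_v f(v)$ over functions $f:V(G)\to\{0,1,2\}$ such that $\sum_{u\in N(v)}f(u)\ge2$ whenever $f(v)=0$ and $\sum_{u\in N(v)}f(u)\ge1$ whenever $f(v)=1$. $\gamma(G)$ is the domination number and $\gamma_{\times2}(G)$ is the minimum size of $D\subseteq V(G)$ with $|N[v]\cap D|\ge2$ for every $v\in V(G)$. $L(G)$ is the set of leaves (degree-one vertices) and $S(G)$ the set of support vertices (vertices adjacent to a leaf). *)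

From mathcomp Require Import all_boot all_order all_algebra.
Set Implicit Arguments. Unset Strict Implicit. Unset Printing Implicit Defensive.

(* A finite simple graph: vertex type T : finType, adjacency e : rel T,
   required symmetric and irreflexive in the theorem. *)
Section Graph.
Variables (T : finType) (e : rel T).

Definition nbhd (v : T) : {set T} := [set u | e v u].
Definition cnbhd (v : T) : {set T} := v |: nbhd v.
Definition deg (v : T) : nat := #|nbhd v|.
Definition maxdeg : nat := \max_(v : T) deg v.
Definition no_isolated : Prop := forall v : T, 0 < deg v.

Definition leaves : {set T} := [set v | deg v == 1].
Definition supports : {set T} := [set v | [exists u, (u \in leaves) && e v u]].

Definition weight (f : {ffun T -> 'I_3}) : nat := \sum_(v : T) (f v : nat).
Definition nbsum (f : {ffun T -> 'I_3}) (v : T) : nat := \sum_(u in nbhd v) (f u : nat).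
Definition is_210df (f : {ffun T -> 'I_3}) : bool :=
  [forall v, ((f v : nat) == 0) ==> (2 <= nbsum f v)] &&
  [forall v, ((f v : nat) == 1) ==> (1 <= nbsum f v)].
Definition gamma210 : nat := \big[minn/(2 * #|T|).+1]_(f | is_210df f) weight f.

Definition dominating (D : {set T}) : bool := [forall v, (v \in D) || [exists u in D, e v u]].
Definition gamma : nat := \big[minn/#|T|.+1]_(D | dominating D) #|D|.

Definition double_dominating (D : {set T}) : bool := [forall v, 2 <= #|cnbhd v :&: D|].
Definition gamma_x2 : nat := \big[minn/#|T|.+1]_(D | double_dominating D) #|D|.
End Graph.

Definition ceil_div (m d : nat) : nat := (m + d.-1) %/ d.

From mathcomp Require Import all_boot all_order all_algebra.
From mathcomp Require Import zify.
Import Order.TTheory GRing.Theory Num.Theory.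

(* A function f : V -> {0,1,2} is a (2,1,0)-dominating function exactly when
   f v + f(N(v)) >= 2 for every v.  Summing this over V and double counting,
   2n <= w(f) + sum_u deg(u) f(u) <= (Delta + 1) w(f), which is the lower bound.
   For the upper bounds, a dominating set D gives the function 2 * 1_D, and a
   double dominating set D (which must contain all leaves and supports) gives
   1_D + 1_S - 1_L, of weight |D| + |S| - |L|: a leaf and its support receive
   values adding up to 2, and a vertex v outside S only has neighbours of value
   at least 1 in D, of which there are at least 2 - [v \in D]. *)

Lemma ceil_div_leq (m d n : nat) : 0 < d -> m <= d * n -> ceil_div m d <= n.
Proof. by move=> d_gt0 le_m_dn; rewrite /ceil_div -ltnS ltn_divLR //; lia. Qed.

Section SumMem.
Variable T : finType.

Lemma sum_mem_card (A : {set T}) : \sum_u (u \in A) = #|A|.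
Proof. by rewrite -sum1_card [RHS]big_mkcond; apply: eq_bigr => u _; case: (u \in A). Qed.

Lemma sum_in_mem_card (A B : {set T}) : \sum_(u in A) (u \in B) = #|A :&: B|.
Proof.
rewrite -sum1_card big_mkcond [RHS]big_mkcond; apply: eq_bigr => u _.
by rewrite inE; case: (u \in A); case: (u \in B).
Qed.

End SumMem.

Section BigMin.
Variables (I : finType) (P : pred I) (F : I -> nat) (idx : nat).

Lemma bigmin_leq i : P i -> \big[minn/idx]_(j | P j) F j <= F i.
Proof.
move=> Pi; have : i \in index_enum I by rewrite mem_index_enum.
elim: (index_enum I) => [|j r IHr] //; rewrite inE big_cons.
case/orP=> [/eqP <-|ir]; first by rewrite Pi geq_minl.
by case: (P j); rewrite ?geq_min IHr ?orbT.
Qed.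

Lemma bigmin_attained i0 : P i0 -> F i0 < idx ->
  exists2 i, P i & \big[minn/idx]_(j | P j) F j = F i.
Proof.
move=> Pi0 lt_i0_idx.
have : \big[minn/idx]_(j | P j) F j = idx \/
       exists2 i, P i & \big[minn/idx]_(j | P j) F j = F i.
  apply: (big_ind (fun x => x = idx \/ exists2 i, P i & x = F i)); first by left.
    by move=> x y hx hy; rewrite /minn; case: ifP.
  by move=> i Pi; right; exists i.
case=> // min_idx; have := bigmin_leq _ Pi0; rewrite min_idx; lia.
Qed.

End BigMin.

Arguments bigmin_leq {I P F idx i}.
Arguments bigmin_attained {I P F idx i0}.

Section Graph.
Variables (T : finType) (e : rel T).

Lemma is_210dfP (f : {ffun T -> 'I_3}) :
  reflect (forall v, 2 <= f v + nbsum e f v) (is_210df e f).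
Proof.
apply: (iffP andP) => [[/forallP f0 /forallP f1] v | f2].
  move: (f0 v) (f1 v) (ltn_ord (f v)).
  by case: (nat_of_ord (f v)) => [|[|[|k]]] //=; lia.
split; apply/forallP => v; apply/implyP => /eqP fv; have := f2 v; rewrite fv; lia.
Qed.

Lemma gamma210_le_sum (g : T -> nat) :
  (forall v, g v <= 2) -> (forall v, 2 <= g v + \sum_(u in nbhd e v) g u) ->
  gamma210 e <= \sum_v g v.
Proof.
move=> g_le2 g_dom.
pose f : {ffun T -> 'I_3} := [ffun v => inord (g v)].
have fE v : (f v : nat) = g v by rewrite ffunE inordK // ltnS.
have f210 : is_210df e f.
  by apply/is_210dfP => v; rewrite /nbsum fE; under eq_bigr do rewrite fE.
apply: leq_trans (bigmin_leq f210) _.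
by rewrite /weight; under eq_bigr do rewrite fE.
Qed.

Lemma gamma210_attained : exists2 f, is_210df e f & gamma210 e = weight f.
Proof.
pose two : {ffun T -> 'I_3} := [ffun=> inord 2].
have twoE v : (two v : nat) = 2 by rewrite ffunE inordK.
apply: bigmin_attained (_ : is_210df e two) _.
  by apply/is_210dfP => v; rewrite twoE.
by rewrite /weight; under eq_bigr do rewrite twoE; rewrite sum_nat_const mulnC.
Qed.

Lemma gamma_attained : exists2 D, dominating e D & gamma e = #|D|.
Proof.
apply: bigmin_attained (_ : dominating e setT) _; last by rewrite cardsT.
by apply/forallP => v; rewrite inE.
Qed.

Lemma gamma210_le_dominating (D : {set T}) : dominating e D -> gamma210 e <= 2 * #|D|.
Proof.
move/forallP=> D_dom.
rewrite -sum1_card big_distrr big_mkcond /=.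
apply: gamma210_le_sum => v; first by case: ifP.
case: ifP => // vD; move: (D_dom v); rewrite vD /= => /existsP [u /andP [uD evu]].
by rewrite (bigD1 u) ?inE //= uD; lia.
Qed.

Lemma gamma210_le_2gamma : gamma210 e <= 2 * gamma e.
Proof. by have [D /gamma210_le_dominating le_D ->] := gamma_attained. Qed.

Lemma deg_le_maxdeg v : deg e v <= maxdeg e.
Proof. exact: leq_bigmax. Qed.

Hypothesis esym : symmetric e.

Lemma sum_nbhdE (g : T -> nat) :
  \sum_v \sum_(u in nbhd e v) g u = \sum_u deg e u * g u.
Proof.
under eq_bigr do rewrite big_mkcond /=.
rewrite exchange_big /=; apply: eq_bigr => u _.
rewrite -big_mkcond /= sum_nat_const; congr (_ * _); apply: eq_card => v.
rewrite unfold_in /=; change ((u \in nbhd e v) = (v \in nbhd e u)).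
by rewrite !inE esym.
Qed.

Lemma weight_210df_lb (f : {ffun T -> 'I_3}) : is_210df e f ->
  2 * #|T| <= (maxdeg e).+1 * weight f.
Proof.
move/is_210dfP => f_dom.
have le_n_sum : 2 * #|T| <= weight f + \sum_v nbsum e f v.
  rewrite /weight -big_split /= -sum1_card big_distrr /=.
  by apply: leq_sum => v _; rewrite muln1.
have le_sum_w : \sum_v nbsum e f v <= maxdeg e * weight f.
  rewrite sum_nbhdE /weight big_distrr /=.
  by apply: leq_sum => u _; rewrite leq_mul2r deg_le_maxdeg orbT.
rewrite mulSn; lia.
Qed.

Lemma ceil_div_le_gamma210 : ceil_div (2 * #|T|) (maxdeg e).+1 <= gamma210 e.
Proof.
have [f f210 ->] := gamma210_attained.
by apply: ceil_div_leq => //; apply: weight_210df_lb.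
Qed.

Hypothesis eirr : irreflexive e.

Lemma notin_nbhd v : v \notin nbhd e v.
Proof. by rewrite inE eirr. Qed.

Lemma gamma_x2_attained : no_isolated e ->
  exists2 D, double_dominating e D & gamma_x2 e = #|D|.
Proof.
move=> noiso; apply: bigmin_attained (_ : double_dominating e setT) _.
  apply/forallP => v; rewrite setIT /cnbhd cardsU1 notin_nbhd.
  exact: noiso.
by rewrite cardsT.
Qed.

Section DoubleDominating.
Variable D : {set T}.
Hypothesis D_x2 : double_dominating e D.

Local Notation L := (leaves e).
Local Notation S := (supports e).

Lemma leaf_nbhd {v} : v \in L -> exists u, nbhd e v = [set u].
Proof. by rewrite inE => /cards1P. Qed.

Lemma leaf_cnbhd_subset {v u} : nbhd e v = [set u] -> cnbhd e v \subset D.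
Proof.
move=> Nv; have card_cnbhd : #|cnbhd e v| = 2.
  by rewrite /cnbhd cardsU1 notin_nbhd Nv cards1.
apply/setIidPl/eqP; rewrite eqEcard subsetIl card_cnbhd.
exact: forallP D_x2 v.
Qed.

Lemma leaves_subset : L \subset D.
Proof.
apply/subsetP => v /leaf_nbhd [u Nv].
by apply: (subsetP (leaf_cnbhd_subset Nv)); rewrite !inE eqxx.
Qed.

Lemma nbhd1_adj {v u} w : nbhd e v = [set u] -> e v w = (w == u).
Proof. by move=> Nv; rewrite -in_set1 -Nv inE. Qed.

Lemma supports_subset : S \subset D.
Proof.
apply/subsetP => v; rewrite inE => /existsP [w /andP [/leaf_nbhd [u Nw]]].
rewrite esym (nbhd1_adj _ Nw) => /eqP ->.
by apply: (subsetP (leaf_cnbhd_subset Nw)); rewrite /cnbhd Nw !inE eqxx orbT.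
Qed.

Lemma leaf_neighbour_support {v u} : v \in L -> nbhd e v = [set u] -> u \in S.
Proof.
move=> vL Nv; rewrite inE; apply/existsP; exists v.
by rewrite vL esym (nbhd1_adj _ Nv) eqxx.
Qed.

Lemma leaf_support_leaf {v u} : nbhd e v = [set u] -> (v \in S) = (u \in L).
Proof.
move=> Nv; rewrite inE; apply/existsP/idP => [[w /andP [wL]] | uL].
  by rewrite (nbhd1_adj _ Nv) => /eqP <-.
by exists u; rewrite uL (nbhd1_adj _ Nv) eqxx.
Qed.

(* The subtraction never truncates, as L is contained in D. *)
Let g v : nat := (v \in D) + (v \in S) - (v \in L).

Lemma sum_g_card : \sum_v g v + #|L| = #|D| + #|S|.
Proof.
rewrite -!sum_mem_card -!big_split; apply: eq_bigr => v _ /=.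
rewrite /g; case vL: (v \in L); last by rewrite subn0 addn0.
by rewrite (subsetP leaves_subset v vL) addKn addnC.
Qed.

Lemma mem_le_g_nbhd_nonsupport v u : v \notin S -> e v u -> (u \in D) <= g u.
Proof.
move=> vS evu; have uL : u \notin L.
  by apply: contra vS => uL; rewrite inE; apply/existsP; exists u; rewrite uL.
by rewrite /g (negbTE uL) subn0 leq_addr.
Qed.

Lemma g_dom v : 2 <= g v + \sum_(u in nbhd e v) g u.
Proof.
case vL: (v \in L).
  have [u Nv] := leaf_nbhd vL.
  have uS := leaf_neighbour_support vL Nv.
  rewrite Nv big_set1 /g vL (subsetP leaves_subset v vL) uS.
  rewrite (subsetP supports_subset u uS) (leaf_support_leaf Nv).
  by case: (u \in L).
case vS: (v \in S).
  by rewrite /g vL vS (subsetP supports_subset v vS).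
have := forallP D_x2 v; rewrite /cnbhd -sum_in_mem_card big_setU1 ?notin_nbhd //=.
move/leq_trans; apply; rewrite /g vL vS addn0 subn0 leq_add2l.
by apply: leq_sum => u; rewrite inE; apply: mem_le_g_nbhd_nonsupport; rewrite vS.
Qed.

Lemma gamma210_le_double_dominating : gamma210 e + #|L| <= #|D| + #|S|.
Proof.
rewrite -sum_g_card leq_add2r; apply: gamma210_le_sum g_dom => v.
by rewrite /g; case: (v \in D); case: (v \in S); case: (v \in L).
Qed.

End DoubleDominating.

Lemma gamma210_le_gamma_x2 : no_isolated e ->
  gamma210 e + #|leaves e| <= gamma_x2 e + #|supports e|.
Proof.
move=> noiso; have [D D_x2 ->] := gamma_x2_attained noiso.
exact: gamma210_le_double_dominating.
Qed.

End Graph.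

Theorem theorem36 (T : finType) (e : rel T)
  (esym : symmetric e) (eirr : irreflexive e) (noiso : no_isolated e) :
  ceil_div (2 * #|T|) (maxdeg e).+1 <= gamma210 e /\
  ((gamma210 e)%:Z <= Num.min ((gamma_x2 e)%:Z - (#|leaves e|)%:Z + (#|supports e|)%:Z)
                            ((2 * gamma e)%N%:Z))%R.
Proof.
split; first exact: ceil_div_le_gamma210.
have le_x2 := @gamma210_le_gamma_x2 _ _ esym eirr noiso.
have le_2gamma := @gamma210_le_2gamma _ e.
by rewrite le_min; apply/andP; split; lia.
Qed.
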